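(* Let $\varphi(t)$ be a geodesic of the $\dot H^1$-metric in $\operatorname{Diff}_{\mathcal A_1}(\mathbb R)$ with $\varphi(0)=\varphi_0$ and $\partial_t\varphi(0)=u_0\circ\varphi_0$ ($u_0\in\mathcal A_1(\mathbb R)$), and let $u(t)=\partial_t\varphi(t)\circ\varphi(t)^{-1}$. Then, for all $t$ in the interval of existence, $$\operatorname{Shift}(\varphi(t))=\operatorname{Shift}(\varphi_0)+t\,u_0(\infty)+\frac{t^2}{4}\int_{\mathbb R}(u_0')^2\,dx,\qquad u(t,\infty)=u_0(\infty)+t\int_{\mathbb R}(u_0')^2\,dx.$$ Consequently, if $u_0\neq0$, there are at most two times $t$ with $\varphi(t)\in\operatorname{Diff}_{\mathcal A}(\mathbb R)$, and at most one time $t$ at which $\varphi$ is tangent to a right coset of $\operatorname{Diff}_{\mathcal A}(\mathbb R)$ (i.e. $u(t,\infty)=0$). If moreover $\varphi_0,\varphi_1\in\operatorname{Diff}_{\mathcal A}(\mathbb R)$ and $\varphi(t)$, $t\in[0,1]$, is the geodesic in $\operatorname{Diff}_{\mathcal A_1}(\mathbb R)$ connecting them, then $$\operatorname{Shift}(\varphi(t))=\frac{t^2-t}{4}\|R(\varphi_0)-R(\varphi_1)\|_{L^2}^2=(t^2-t)\big\|\sqrt{\varphi_0'}-\sqrt{\varphi_1'}\big\|_{L^2}^2.$$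
   Context: $\mathcal A(\mathbb R)$ denotes any one of $C^\infty_c(\mathbb R)$, $\mathcal S(\mathbb R)$, $W^{\infty,1}(\mathbb R)$; $\mathcal A_1(\mathbb R)=\{x\mapsto\int_{-\infty}^xg\,dy: g\in\mathcal A(\mathbb R)\}$; $\operatorname{Diff}_{\mathcal A}(\mathbb R)=\{\mathrm{Id}+f: f\in\mathcal A(\mathbb R), f'>-1\}$ and $\operatorname{Diff}_{\mathcal A_1}(\mathbb R)=\{\mathrm{Id}+f: f\in\mathcal A_1(\mathbb R), f'>-1\}$, the latter with the right-invariant metric $G_\varphi(X\circ\varphi,Y\circ\varphi)=\int X'Y'\,dx$. For $\varphi\in\operatorname{Diff}_{\mathcal A_1}(\mathbb R)$, $\operatorname{Shift}(\varphi)=\lim_{x\to\infty}(\varphi(x)-x)$; $\varphi\in\operatorname{Diff}_{\mathcal A}(\mathbb R)$ iff $\operatorname{Shift}(\varphi)=0$, and right cosets $\operatorname{Diff}_{\mathcal A}(\mathbb R)\circ\psi$ are the level sets of $\operatorname{Shift}$. For $u\in\mathcal A_1(\mathbb R)$, $u(\infty)=\lim_{x\to\infty}u(x)$. $R(\varphi)=2((\varphi')^{1/2}-1)$. *)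

From Stdlib Require Export Reals.
Open Scope R_scope.

Definition derivs (f : R -> R) (D : nat -> R -> R) : Prop :=
  (forall x, D 0%nat x = f x) /\
  (forall (n : nat) (x : R), derivable_pt_lim (D n) x (D (S n) x)).

(* int_{-oo}^{+oo} |g| <= eps  (for continuous g: every finite piece is <= eps) *)
Definition int_abs_le (g : R -> R) (eps : R) : Prop :=
  forall a b, a <= b ->
    forall pr : Riemann_integrable (fun x => Rabs (g x)) a b, RiemannInt pr <= eps.

Definition integral_R (f : R -> R) (l : R) : Prop :=
  forall eps, eps > 0 -> exists M, M > 0 /\
    forall a b, a <= - M -> M <= b ->
      exists pr : Riemann_integrable f a b, Rabs (RiemannInt pr - l) < eps.

Definition integral_minf (g : R -> R) (x l : R) : Prop :=
  forall eps, eps > 0 -> exists M,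
    forall a, a <= M -> a <= x ->
      exists pr : Riemann_integrable g a x, Rabs (RiemannInt pr - l) < eps.

Definition lim_pinf (f : R -> R) (l : R) : Prop :=
  forall eps, eps > 0 -> exists M, forall x, x >= M -> Rabs (f x - l) < eps.

Definition has_shift (phi : R -> R) (s : R) : Prop :=
  lim_pinf (fun x => phi x - x) s.

(* The three admissible choices of A(R): C_c^oo, Schwartz S, W^{oo,1}. *)
Inductive Aclass : Type := Cc | Schwartz | Winf1.

Definition inA (A : Aclass) (f : R -> R) : Prop :=
  exists D, derivs f D /\
  match A with
  | Cc => exists K, forall x, K < Rabs x -> f x = 0
  | Schwartz => forall j k : nat, exists C, forall x, Rabs (x ^ j * D k x) <= C
  | Winf1 => forall k : nat, exists C, int_abs_le (D k) C
  end.

Definition inA1 (A : Aclass) (f : R -> R) : Prop :=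
  exists g, inA A g /\ forall x, integral_minf g x (f x).

Definition inDiffA (A : Aclass) (phi : R -> R) : Prop :=
  exists f, inA A f /\ (forall x, phi x = x + f x) /\
    (forall x, exists l, derivable_pt_lim f x l /\ l > -1).

Definition inDiffA1 (A : Aclass) (phi : R -> R) : Prop :=
  exists f, inA1 A f /\ (forall x, phi x = x + f x) /\
    (forall x, exists l, derivable_pt_lim f x l /\ l > -1).

(* The defining seminorms of the Frechet topology of A(R), applied to a
   function given by its derivative sequence q (index k: derivative order,
   j: weight x^j for Schwartz). "seminorm_{k,j}(q) <= eps". *)
Definition snle (A : Aclass) (k j : nat) (q : nat -> R -> R) (eps : R) : Prop :=
  match A with
  | Cc => forall x, Rabs (q k x) <= eps
  | Schwartz => forall x, Rabs (x ^ j * q k x) <= eps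
  | Winf1 => int_abs_le (q k) eps
  end.

(* C m t k x = d_t^m d_x^k c(t)(x).  For C_c^oo (an LF space) smooth
   curves are those which locally have support in a fixed compact set and are
   smooth into that step (convenient calculus). *)
Definition smooth_curve_A (A : Aclass) (J : R -> Prop)
    (C : nat -> R -> nat -> R -> R) : Prop :=
  (forall m t, J t -> derivs (C m t 0%nat) (C m t) /\ inA A (C m t 0%nat)) /\
  (forall m t, J t -> forall (k j : nat) eps, eps > 0 -> exists delta, delta > 0 /\
     forall h, h <> 0 -> Rabs h < delta -> J (t + h) ->
       snle A k j (fun k' x => (C m (t + h) k' x - C m t k' x) / h - C (S m) t k' x) eps) /\
  (A = Cc -> forall t, J t -> exists delta K, delta > 0 /\
     forall s x, J s -> Rabs (s - t) < delta -> K < Rabs x -> C 0%nat s 0%nat x = 0).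

(* Geodesic of the right-invariant H^1-dot metric G_phi(h,k) = int h' k' / phi'
   in Diff_{A_1}(R), on the time interval J.
   - phi(t) in Diff_{A_1} for t in J;
   - t |-> phi(t) - Id is a smooth curve in A_1(R); A_1 carries the topology
     transported from A(R) by the isomorphism f |-> f', so this means that
     t |-> phi(t)' - 1 is a smooth curve C in A(R);
   - the geodesic equation phi_tt = Gamma_phi(phi_t, phi_t) (Euler-Lagrange
     equation of the energy 1/2 int phi_tx^2/phi_x dx; equivalently the
     Hunter-Saxton equation for u = phi_t o phi^{-1}), written after applying
     the isomorphism d_x : A_1 -> A:  phi_ttx = 1/2 phi_tx^2 / phi_x. *)
Definition is_geodesic (A : Aclass) (J : R -> Prop) (phi : R -> R -> R) : Prop :=
  exists C : nat -> R -> nat -> R -> R,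
    smooth_curve_A A J C /\
    (forall t, J t -> inDiffA1 A (phi t)) /\
    (forall t x, J t -> derivable_pt_lim (phi t) x (1 + C 0%nat t 0%nat x)) /\
    (forall t x, J t ->
       C 2%nat t 0%nat x = / 2 * (C 1%nat t 0%nat x) ^ 2 / (1 + C 0%nat t 0%nat x)).

Definition deriv_in (J : R -> Prop) (f : R -> R) (t l : R) : Prop :=
  forall eps, eps > 0 -> exists delta, delta > 0 /\
    forall h, h <> 0 -> Rabs h < delta -> J (t + h) ->
      Rabs ((f (t + h) - f t) / h - l) < eps.

(* R(phi) = 2 ((phi')^{1/2} - 1), as a function of the value phi'(x) *)
Definition Rmap (dphi : R) : R := 2 * (sqrt dphi - 1).

(* Along a geodesic of the H^1-dot metric, sqrt (phi_t') is affine in t: the geodesic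
   equation phi_ttx = phi_tx^2 / (2 phi_x) says exactly that c'/sqrt(1 + c) is a first
   integral for c = phi_x - 1, i.e. R(phi_t) moves on a straight line.  Hence
   phi_t' = (w + t k)^2, and integrating in x from -oo (where phi_t - Id vanishes) gives
   phi_t = phi_0 + t P + t^2 Q with P' = 2 w k and Q' = k^2.  The initial velocity
   identifies P = u0 o phi_0, so k = u0'(phi_0) sqrt(phi_0') / 2, and the substitution
   y = phi_0 x turns Q(+oo) into (1/4) int (u0')^2.  The limits of P and Q at +oo give
   Shift(phi_t) and u(t, oo), which are a quadratic and an affine function of t whose
   leading coefficient vanishes only when u0 = 0.  Between phi_0, phi_1 in Diff_A one has
   k = sqrt(phi_1') - sqrt(phi_0') and both endpoint shifts vanish. *)

From Stdlib Require Import Reals Lra Psatz Classical_Prop.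
From Coquelicot Require Import Coquelicot.
Open Scope R_scope.

Lemma eq0_of_Rabs_lt_all (z : R) : (forall eps, eps > 0 -> Rabs z < eps) -> z = 0.
Proof.
  intros H. destruct (Req_dec z 0) as [|Hz]; auto.
  specialize (H _ (Rabs_pos_lt z Hz)). lra.
Qed.

Lemma Rabs_lincomb_lt (a b u v eps : R) : eps > 0 ->
  Rabs u < eps / (Rabs a + Rabs b + 1) -> Rabs v < eps / (Rabs a + Rabs b + 1) ->
  Rabs (a * u + b * v) < eps.
Proof.
  intros He Hu Hv. set (e := eps / (Rabs a + Rabs b + 1)) in *.
  pose proof (Rabs_pos a); pose proof (Rabs_pos b); pose proof (Rabs_pos u); pose proof (Rabs_pos v).
  assert (Ee : e * (Rabs a + Rabs b + 1) = eps) by (unfold e; field; lra).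
  eapply Rle_lt_trans; [apply Rabs_triang|]. rewrite !Rabs_mult.
  assert (Rabs a * Rabs u <= Rabs a * e) by (apply Rmult_le_compat_l; lra).
  assert (Rabs b * Rabs v <= Rabs b * e) by (apply Rmult_le_compat_l; lra).
  nra.
Qed.

Lemma lincomb_eps_pos (a b eps : R) : eps > 0 -> eps / (Rabs a + Rabs b + 1) > 0.
Proof. intros. apply Rdiv_lt_0_compat; auto. pose proof (Rabs_pos a); pose proof (Rabs_pos b); lra. Qed.

Lemma quadratic_at_most_two_roots (S U E t1 t2 t3 : R) : E <> 0 ->
  S + t1 * U + t1 ^ 2 / 4 * E = 0 -> S + t2 * U + t2 ^ 2 / 4 * E = 0 ->
  S + t3 * U + t3 ^ 2 / 4 * E = 0 -> t1 = t2 \/ t1 = t3 \/ t2 = t3.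
Proof.
  intros HE H1 H2 H3.
  destruct (Req_dec t1 t2) as [|n12]; auto. destruct (Req_dec t1 t3) as [|n13]; auto.
  right; right.
  assert (E12 : (t1 - t2) * (U + (t1 + t2) / 4 * E)
                = (S + t1 * U + t1 ^ 2 / 4 * E) - (S + t2 * U + t2 ^ 2 / 4 * E)) by field.
  assert (E13 : (t1 - t3) * (U + (t1 + t3) / 4 * E)
                = (S + t1 * U + t1 ^ 2 / 4 * E) - (S + t3 * U + t3 ^ 2 / 4 * E)) by field.
  rewrite H1, H2, Rminus_diag in E12. rewrite H1, H3, Rminus_diag in E13.
  apply Rmult_integral in E12 as [|E12]; [lra|]. apply Rmult_integral in E13 as [|E13]; [lra|].
  assert (E23 : (t2 - t3) * E = 0) by lra.
  apply Rmult_integral in E23 as [|]; [lra | contradiction].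
Qed.

Lemma affine_at_most_one_root (U E t1 t2 : R) : E <> 0 ->
  U + t1 / 2 * E = 0 -> U + t2 / 2 * E = 0 -> t1 = t2.
Proof.
  intros HE H1 H2. assert (E12 : (t1 - t2) * E = 0) by lra.
  apply Rmult_integral in E12 as [|]; [lra | contradiction].
Qed.

Lemma derivable_pt_lim_continuous (f df : R -> R) :
  (forall y, derivable_pt_lim f y (df y)) -> forall y, continuous f y.
Proof.
  intros H y. apply (ex_derive_continuous (K:=R_AbsRing) (V:=R_NormedModule) f y).
  exists (df y). now apply is_derive_Reals.
Qed.

Lemma derivable_pt_lim_lincomb (f g : R -> R) (a b x lf lg : R) :
  derivable_pt_lim f x lf -> derivable_pt_lim g x lg ->
  derivable_pt_lim (fun y => a * f y + b * g y) x (a * lf + b * lg).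
Proof.
  intros Hf Hg.
  exact (derivable_pt_lim_plus _ _ x _ _ (derivable_pt_lim_scal f a x _ Hf) (derivable_pt_lim_scal g b x _ Hg)).
Qed.

Lemma eq_of_derive0_on (a b : R) (f : R -> R) :
  (forall t, a < t < b -> derivable_pt_lim f t 0) ->
  forall t s, a < t < b -> a < s < b -> f t = f s.
Proof.
  intros H t s Ht Hs.
  destruct (MVT_gen f s t (fun _ => 0)) as [c [_ Hc]].
  - intros x Hx. apply is_derive_Reals. apply H.
    unfold Rmin, Rmax in Hx; destruct (Rle_dec s t); lra.
  - intros x Hx. apply derivable_continuous_pt. exists 0. apply H.
    unfold Rmin, Rmax in Hx; destruct (Rle_dec s t); lra.
  - lra.
Qed.

Lemma eq_of_derive0 (f : R -> R) : (forall t, derivable_pt_lim f t 0) -> forall t s, f t = f s.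
Proof.
  intros H t s. apply (eq_of_derive0_on (Rmin t s - 1) (Rmax t s + 1)); [intros; apply H| |];
    unfold Rmin, Rmax; destruct (Rle_dec t s); lra.
Qed.

Lemma affine_of_derive_const (a b m : R) (g : R -> R) :
  (forall t, a < t < b -> derivable_pt_lim g t m) ->
  forall s t, a < s < b -> a < t < b -> g t = g s + (t - s) * m.
Proof.
  intros Hg s t Hs Ht.
  assert (H0 : forall r, a < r < b -> derivable_pt_lim (fun r => g r - r * m) r 0).
  { intros r Hr. replace 0 with (m - m) by ring.
    apply derivable_pt_lim_minus; [auto|].
    apply is_derive_Reals. auto_derive; auto; ring. }
  pose proof (eq_of_derive0_on a b _ H0 t s Ht Hs). lra.
Qed.

Lemma nondecreasing_of_derive_nonneg (f df : R -> R) :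
  (forall x, derivable_pt_lim f x (df x)) -> (forall x, 0 <= df x) ->
  forall y x, y <= x -> f y <= f x.
Proof.
  intros Hd Hpos y x Hyx.
  destruct (MVT_gen f y x df) as [c [_ Hc]].
  - intros; apply is_derive_Reals; auto.
  - intros; apply derivable_continuous_pt; eexists; apply Hd.
  - specialize (Hpos c). nra.
Qed.

(** * Behaviour at infinity *)

Definition vanishes_minf (f : R -> R) : Prop :=
  forall eps, eps > 0 -> exists M, forall x, x <= M -> Rabs (f x) < eps.

Definition tends_pinf (f : R -> R) : Prop := forall M, exists X, forall x, x >= X -> f x >= M.

Definition tends_minf (f : R -> R) : Prop := forall M, exists X, forall x, x <= X -> f x <= M.

Lemma vanishes_minf_ext (f g : R -> R) :
  (forall x, f x = g x) -> vanishes_minf f -> vanishes_minf g.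
Proof. intros E H eps He. destruct (H eps He) as [M HM]. exists M. intros; rewrite <- E; auto. Qed.

Lemma vanishes_minf_lincomb (f g : R -> R) (a b : R) :
  vanishes_minf f -> vanishes_minf g -> vanishes_minf (fun x => a * f x + b * g x).
Proof.
  intros Hf Hg eps He.
  destruct (Hf _ (lincomb_eps_pos a b eps He)) as [M1 H1].
  destruct (Hg _ (lincomb_eps_pos a b eps He)) as [M2 H2].
  exists (Rmin M1 M2). intros x Hx. pose proof (Rmin_l M1 M2); pose proof (Rmin_r M1 M2).
  apply Rabs_lincomb_lt; auto; [apply H1 | apply H2]; lra.
Qed.

Lemma lim_pinf_ext (f g : R -> R) (l : R) :
  (forall x, f x = g x) -> lim_pinf f l -> lim_pinf g l.
Proof. intros E H eps He. destruct (H eps He) as [M HM]. exists M. intros; rewrite <- E; auto. Qed.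

Lemma lim_pinf_lincomb (f g : R -> R) (a b l1 l2 : R) :
  lim_pinf f l1 -> lim_pinf g l2 -> lim_pinf (fun x => a * f x + b * g x) (a * l1 + b * l2).
Proof.
  intros Hf Hg eps He.
  destruct (Hf _ (lincomb_eps_pos a b eps He)) as [M1 H1].
  destruct (Hg _ (lincomb_eps_pos a b eps He)) as [M2 H2].
  exists (Rmax M1 M2). intros x Hx. pose proof (Rmax_l M1 M2); pose proof (Rmax_r M1 M2).
  replace (a * f x + b * g x - (a * l1 + b * l2)) with (a * (f x - l1) + b * (g x - l2)) by ring.
  apply Rabs_lincomb_lt; auto; [apply H1 | apply H2]; lra.
Qed.

Lemma lim_pinf_unique (f : R -> R) (l1 l2 : R) : lim_pinf f l1 -> lim_pinf f l2 -> l1 = l2.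
Proof.
  intros H1 H2. apply Rminus_diag_uniq, eq0_of_Rabs_lt_all. intros eps He.
  destruct (H1 (eps/2) ltac:(lra)) as [M1 HM1]. destruct (H2 (eps/2) ltac:(lra)) as [M2 HM2].
  pose proof (Rmax_l M1 M2); pose proof (Rmax_r M1 M2).
  specialize (HM1 (Rmax M1 M2) ltac:(lra)). specialize (HM2 (Rmax M1 M2) ltac:(lra)).
  replace (l1 - l2) with (- (f (Rmax M1 M2) - l1) + (f (Rmax M1 M2) - l2)) by ring.
  eapply Rle_lt_trans; [apply Rabs_triang|]. rewrite Rabs_Ropp. lra.
Qed.

Lemma lim_pinf_comp (f p : R -> R) (l : R) :
  lim_pinf f l -> tends_pinf p -> lim_pinf (fun x => f (p x)) l.
Proof.
  intros Hf Hp eps He. destruct (Hf eps He) as [M HM]. destruct (Hp M) as [X HX].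
  exists X. auto.
Qed.

Lemma has_shift_tends_pinf (f : R -> R) (s : R) : has_shift f s -> tends_pinf f.
Proof.
  intros H M. destruct (H 1 ltac:(lra)) as [M1 HM1]. exists (Rmax M1 (M - s + 1)).
  intros x Hx. pose proof (Rmax_l M1 (M - s + 1)); pose proof (Rmax_r M1 (M - s + 1)).
  specialize (HM1 x ltac:(lra)). apply Rabs_def2 in HM1. lra.
Qed.

Lemma vanishes_minf_shift_tends_minf (f : R -> R) :
  vanishes_minf (fun x => f x - x) -> tends_minf f.
Proof.
  intros H M. destruct (H 1 ltac:(lra)) as [M1 HM1]. exists (Rmin M1 (M - 1)).
  intros y Hy. pose proof (Rmin_l M1 (M - 1)); pose proof (Rmin_r M1 (M - 1)).
  specialize (HM1 y ltac:(lra)). apply Rabs_def2 in HM1. lra.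
Qed.

Lemma eq0_of_derive0_vanishes_minf (f : R -> R) :
  (forall x, derivable_pt_lim f x 0) -> vanishes_minf f -> forall x, f x = 0.
Proof.
  intros Hd Hv x. apply eq0_of_Rabs_lt_all. intros eps He. destruct (Hv eps He) as [M HM].
  rewrite (eq_of_derive0 f Hd x (Rmin M x)). apply HM, Rmin_l.
Qed.

Lemma eq0_of_nondecreasing_vanishing (f : R -> R) :
  (forall y x, y <= x -> f y <= f x) -> vanishes_minf f -> lim_pinf f 0 -> forall x, f x = 0.
Proof.
  intros Hmono Hm Hp x. apply eq0_of_Rabs_lt_all. intros eps He.
  destruct (Hm eps He) as [M1 HM1]. destruct (Hp eps He) as [M2 HM2].
  pose proof (Rmin_l M1 x); pose proof (Rmin_r M1 x); pose proof (Rmax_l M2 x); pose proof (Rmax_r M2 x).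
  specialize (HM1 (Rmin M1 x) ltac:(lra)). specialize (HM2 (Rmax M2 x) ltac:(lra)).
  rewrite Rminus_0_r in HM2.
  pose proof (Hmono (Rmin M1 x) x ltac:(lra)). pose proof (Hmono x (Rmax M2 x) ltac:(lra)).
  apply Rabs_def2 in HM1. apply Rabs_def2 in HM2. apply Rabs_def1; lra.
Qed.

Lemma continuous_tends_pinf_hits (f : R -> R) :
  (forall x, continuous f x) -> tends_pinf f -> forall X y, f X <= y -> exists x, X <= x /\ f x = y.
Proof.
  intros Hc Hp X y Hy. destruct (Hp y) as [M HM].
  pose proof (Rmax_l X M) as HX. specialize (HM (Rmax X M) (Rle_ge _ _ (Rmax_r X M))).
  destruct (IVT_gen f X (Rmax X M) y) as [x [Hx Hfx]].
  { intros z. apply continuity_pt_filterlim, Hc. }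
  { pose proof (Rmin_l (f X) (f (Rmax X M))). pose proof (Rmax_r (f X) (f (Rmax X M))). lra. }
  exists x. split; auto. rewrite Rmin_left in Hx by lra. lra.
Qed.

Lemma continuous_tends_surjective (f : R -> R) :
  (forall x, continuous f x) -> tends_pinf f -> tends_minf f -> forall y, exists x, f x = y.
Proof.
  intros Hc Hp Hm y. destruct (Hm y) as [X HX].
  assert (HXy : f X <= y) by (apply HX; lra).
  destruct (continuous_tends_pinf_hits f Hc Hp X y HXy) as [x [_ Hx]]; eauto.
Qed.

Lemma ex_RInt_continuous_R (f : R -> R) (a b : R) : (forall y, continuous f y) -> ex_RInt f a b.
Proof. intros H. apply (ex_RInt_continuous (V:=R_CompleteNormedModule)). intros; apply H. Qed.

Lemma continuous_Rabs_fun (g : R -> R) :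
  (forall x, continuous g x) -> forall x, @continuous R_UniformSpace R_UniformSpace (fun y => Rabs (g y)) x.
Proof. intros H x. apply continuous_Rabs_comp, H. Qed.

Lemma continuous_sqr_fun (g : R -> R) :
  (forall x, continuous g x) -> forall x, @continuous R_UniformSpace R_UniformSpace (fun z => g z ^ 2) x.
Proof.
  intros H x. apply (continuous_comp g (fun v => v ^ 2)); auto.
  apply (ex_derive_continuous (K:=R_AbsRing) (V:=R_NormedModule)). auto_derive; auto.
Qed.

Lemma RInt_Chasles_sub (h : R -> R) (a b c : R) :
  (forall x, continuous h x) -> RInt h a c - RInt h a b = RInt h b c.
Proof.
  intros Hc.
  rewrite <- (RInt_Chasles (V:=R_CompleteNormedModule) h a b c); try apply ex_RInt_continuous_R; auto.
  simpl. unfold plus; simpl. ring.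
Qed.

Lemma RInt_ge0_continuous (h : R -> R) (a b : R) :
  (forall x, continuous h x) -> (forall x, 0 <= h x) -> a <= b -> 0 <= RInt h a b.
Proof. intros Hc Hp Hab. apply RInt_ge_0; auto. apply ex_RInt_continuous_R; auto. Qed.

Lemma RInt_of_Riemann (g : R -> R) (a b : R) (pr : Riemann_integrable g a b) :
  RiemannInt pr = RInt g a b.
Proof. symmetry. apply RInt_Reals. Qed.

Lemma derivable_pt_lim_RInt (g : R -> R) (a : R) :
  (forall x, continuous g x) -> forall z, derivable_pt_lim (fun b => RInt g a b) z (g z).
Proof.
  intros Hg z. apply is_derive_Reals, (is_derive_RInt g _ a z); auto.
  apply filter_forall. intros b. apply (RInt_correct (V:=R_CompleteNormedModule)).
  apply ex_RInt_continuous_R; auto.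
Qed.

Lemma RInt_Rabs_le_of_int_abs_le (g : R -> R) (eps : R) :
  int_abs_le g eps -> (forall y, continuous g y) ->
  forall a b, a <= b -> RInt (fun y => Rabs (g y)) a b <= eps.
Proof.
  intros H Hc a b Hab.
  assert (pr : Riemann_integrable (fun x => Rabs (g x)) a b).
  { apply continuity_implies_RiemannInt; auto. intros x _.
    apply continuity_pt_filterlim, continuous_Rabs_fun, Hc. }
  rewrite (RInt_Reals _ _ _ pr). apply H; auto.
Qed.

Lemma Rabs_le_unit_W11 (q dq : R -> R) :
  (forall y, derivable_pt_lim q y (dq y)) -> (forall y, continuous dq y) ->
  forall x, Rabs (q x) <= RInt (fun y => Rabs (q y)) (x - 1) x + RInt (fun y => Rabs (dq y)) (x - 1) x.
Proof.
  intros Hd Hc x.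
  assert (Hq : forall y, continuous q y) by (apply (derivable_pt_lim_continuous _ _ Hd)).
  set (K := RInt (fun y => Rabs (dq y)) (x - 1) x).
  assert (Hy : forall y, x - 1 <= y <= x -> Rabs (q x) - K <= Rabs (q y)).
  { intros y Hy.
    assert (E1 : RInt dq y x = q x - q y).
    { apply is_RInt_unique, (is_RInt_derive q dq).
      - intros; apply is_derive_Reals; apply Hd.
      - intros; apply Hc. }
    assert (E2 : Rabs (RInt dq y x) <= RInt (fun t => Rabs (dq t)) y x).
    { apply abs_RInt_le; [lra|]. apply ex_RInt_continuous_R; auto. }
    assert (E3 : RInt (fun t => Rabs (dq t)) (x - 1) y + RInt (fun t => Rabs (dq t)) y x = K).
    { apply (RInt_Chasles (fun t => Rabs (dq t))); apply ex_RInt_continuous_R, continuous_Rabs_fun; auto. }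
    assert (E4 : 0 <= RInt (fun t => Rabs (dq t)) (x - 1) y).
    { apply RInt_ge0_continuous; [apply continuous_Rabs_fun; auto | intros; apply Rabs_pos | lra]. }
    rewrite E1 in E2.
    assert (Rabs (q x) <= Rabs (q y) + Rabs (q x - q y)).
    { replace (q x) with (q y + (q x - q y)) at 1 by ring. apply Rabs_triang. }
    lra. }
  assert (HI : RInt (fun _ => Rabs (q x) - K) (x - 1) x <= RInt (fun y => Rabs (q y)) (x - 1) x).
  { apply RInt_le; [lra | apply ex_RInt_const | |].
    - apply ex_RInt_continuous_R, continuous_Rabs_fun; auto.
    - intros; apply Hy; lra. }
  rewrite RInt_const in HI. unfold scal in HI; simpl in HI. unfold mult in HI; simpl in HI.
  lra.
Qed.

Lemma nondecreasing_bounded_tail (F : R -> R) (K : R) :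
  (forall y x, y <= x -> F y <= F x) -> (forall x, F x <= K) ->
  forall eps, eps > 0 -> exists M, forall a b, M <= a <= b -> F b - F a < eps.
Proof.
  intros Hmono HK eps He.
  destruct (completeness (fun v => exists x, v = F x)) as [L [HL1 HL2]].
  { exists K. intros v [x ->]. apply HK. }
  { exists (F 0), 0. reflexivity. }
  assert (Hx0 : exists x0, F x0 > L - eps).
  { apply NNPP. intros Hno. assert (L <= L - eps); [|lra].
    apply HL2. intros v [x ->]. apply Rnot_lt_le. intros Hx. apply Hno. exists x. lra. }
  destruct Hx0 as [x0 Hx0]. exists x0. intros a b Hab.
  assert (F b <= L) by (apply HL1; exists b; reflexivity).
  pose proof (Hmono x0 a ltac:(lra)). lra.
Qed.

Section NonnegIntegrable.

Variables (h : R -> R) (K : R).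
Hypothesis h_cont : forall x, continuous h x.
Hypothesis h_nonneg : forall x, 0 <= h x.
Hypothesis h_bounded : forall a b, a <= b -> RInt h a b <= K.

Let bound_nonneg : 0 <= K.
Proof. pose proof (h_bounded 0 0 (Rle_refl 0)) as H. rewrite (RInt_point 0 h) in H. exact H. Qed.

Lemma RInt_nonneg_tail_pinf :
  forall eps, eps > 0 -> exists M, forall a b, M <= a <= b -> RInt h a b < eps.
Proof.
  intros eps He.
  destruct (nondecreasing_bounded_tail (fun x => RInt h 0 x) K) with (eps := eps)
    as [M HM]; auto.
  - intros y x Hyx. cbv beta. pose proof (RInt_Chasles_sub h 0 y x h_cont).
    pose proof (RInt_ge0_continuous h y x h_cont h_nonneg Hyx). lra.
  - intros x. cbv beta. destruct (Rle_dec 0 x); [apply h_bounded; lra|].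
    rewrite <- opp_RInt_swap by (apply ex_RInt_continuous_R; auto).
    pose proof (RInt_ge0_continuous h x 0 h_cont h_nonneg ltac:(lra)). pose proof bound_nonneg. simpl; unfold opp; simpl. lra.
  - exists M. intros a b Hab. rewrite <- (RInt_Chasles_sub h 0 a b h_cont). auto.
Qed.

Lemma RInt_nonneg_tail_minf :
  forall eps, eps > 0 -> exists M, forall a b, a <= b <= M -> RInt h a b < eps.
Proof.
  intros eps He.
  destruct (nondecreasing_bounded_tail (fun y => RInt h (- y) 0) K) with (eps := eps)
    as [M HM]; auto.
  - intros y x Hyx. cbv beta. pose proof (RInt_Chasles_sub h (- x) (- y) 0 h_cont).
    pose proof (RInt_ge0_continuous h (- x) (- y) h_cont h_nonneg ltac:(lra)). lra.
  - intros x. cbv beta. destruct (Rle_dec (- x) 0); [apply h_bounded; lra|].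
    rewrite <- opp_RInt_swap by (apply ex_RInt_continuous_R; auto).
    pose proof (RInt_ge0_continuous h 0 (- x) h_cont h_nonneg ltac:(lra)). pose proof bound_nonneg. simpl; unfold opp; simpl. lra.
  - exists (- M). intros a b Hab.
    specialize (HM (- b) (- a) ltac:(lra)). cbv beta in HM. rewrite !Ropp_involutive in HM.
    pose proof (RInt_Chasles_sub h a b 0 h_cont). lra.
Qed.

End NonnegIntegrable.

(** * The function classes [A] and [A_1] *)

Lemma inA_continuous (A : Aclass) (g : R -> R) : inA A g -> forall x, continuous g x.
Proof.
  intros [D [[D0 HD] _]].
  apply (derivable_pt_lim_continuous _ (D 1%nat)). intros x.
  apply (derivable_pt_lim_ext (D 0%nat)); auto.
Qed.

Lemma continuous_lorentzian (C : R) :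
  forall x, @continuous R_UniformSpace R_UniformSpace (fun y => C * / (1 + y ^ 2)) x.
Proof.
  intros x. apply (ex_derive_continuous (K:=R_AbsRing) (V:=R_NormedModule)).
  auto_derive. nra.
Qed.

(* Domination by the integrable function C / (1 + x^2), whose integral is C (atan b - atan a). *)
Lemma RInt_Rabs_le_of_decay (g : R -> R) (C : R) :
  (forall x, continuous g x) -> (forall x, (1 + x ^ 2) * Rabs (g x) <= C) ->
  forall a b, a <= b -> RInt (fun y => Rabs (g y)) a b <= C * PI.
Proof.
  intros Hc HC a b Hab.
  assert (C0 : 0 <= C) by (specialize (HC 0); pose proof (Rabs_pos (g 0)); simpl in HC; nra).
  assert (I : RInt (fun y => C * / (1 + y ^ 2)) a b = C * atan b - C * atan a).
  { apply is_RInt_unique, (is_RInt_derive (fun y => C * atan y)).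
    - intros x _. apply is_derive_Reals, (derivable_pt_lim_scal atan C x), derivable_pt_lim_atan.
    - intros x _. apply continuous_lorentzian. }
  assert (L : RInt (fun y => Rabs (g y)) a b <= RInt (fun y => C * / (1 + y ^ 2)) a b).
  { apply RInt_le; auto.
    - apply ex_RInt_continuous_R, continuous_Rabs_fun; auto.
    - apply ex_RInt_continuous_R, continuous_lorentzian.
    - intros x _. specialize (HC x). assert (0 < 1 + x ^ 2) by nra.
      apply (Rmult_le_reg_l (1 + x ^ 2)); auto. field_simplify; lra. }
  rewrite I in L. pose proof (atan_bound a). pose proof (atan_bound b). nra.
Qed.

Lemma inA_L1_bounded (A : Aclass) (g : R -> R) :
  inA A g -> exists K, forall a b, a <= b -> RInt (fun y => Rabs (g y)) a b <= K.
Proof.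
  intros HA. assert (Hc := inA_continuous A g HA).
  destruct HA as [D [[D0 HD] HB]]. destruct A.
  - destruct HB as [K HK].
    destruct (continuity_ab_maj (fun y => Rabs (g y)) (- Rabs K) (Rabs K)) as [m [Hm _]].
    { pose proof (Rabs_pos K); lra. }
    { intros; apply continuity_pt_filterlim, continuous_Rabs_fun; auto. }
    exists ((1 + K ^ 2) * Rabs (g m) * PI). apply RInt_Rabs_le_of_decay; auto. intros x.
    pose proof (Rabs_pos (g m)). pose proof (Rabs_pos (g x)).
    destruct (Rle_dec (Rabs x) (Rabs K)).
    + assert (Rabs (g x) <= Rabs (g m)) by (apply Hm, Rabs_le_between; auto).
      assert (x ^ 2 <= K ^ 2).
      { rewrite <- (pow2_abs x), <- (pow2_abs K). pose proof (Rabs_pos x). nra. }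
      nra.
    + rewrite (HK x) by (pose proof (Rle_abs K); lra). rewrite Rabs_R0, Rmult_0_r.
      pose proof (pow2_ge_0 K). nra.
  - destruct (HB 0%nat 0%nat) as [C0 HC0]. destruct (HB 2%nat 0%nat) as [C2 HC2].
    exists ((C0 + C2) * PI). apply RInt_Rabs_le_of_decay; auto. intros x.
    specialize (HC0 x). specialize (HC2 x). rewrite D0 in HC0, HC2.
    rewrite pow_O, Rmult_1_l in HC0. rewrite Rabs_mult, (Rabs_pos_eq (x ^ 2)) in HC2 by nra.
    nra.
  - destruct (HB 0%nat) as [C HC]. exists C. intros a b Hab.
    rewrite (RInt_ext (fun y => Rabs (g y)) (fun y => Rabs (D 0%nat y))) by (intros; rewrite D0; auto).
    apply RInt_Rabs_le_of_int_abs_le; auto. intros y. apply (continuous_ext g); auto.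
Qed.

Lemma lim_pinf0_of_W11 (q dq : R -> R) (C0 C1 : R) :
  (forall y, derivable_pt_lim q y (dq y)) -> (forall y, continuous dq y) ->
  int_abs_le q C0 -> int_abs_le dq C1 -> lim_pinf q 0.
Proof.
  intros Hd Hdc HC0 HC1.
  assert (Hc : forall x, continuous q x) by (apply (derivable_pt_lim_continuous _ _ Hd)).
  set (h := fun y => Rabs (q y) + Rabs (dq y)).
  assert (HI : forall a b, RInt h a b = RInt (fun y => Rabs (q y)) a b + RInt (fun y => Rabs (dq y)) a b).
  { intros. apply (RInt_plus (V:=R_CompleteNormedModule));
      apply ex_RInt_continuous_R, continuous_Rabs_fun; auto. }
  intros eps He.
  destruct (RInt_nonneg_tail_pinf h (C0 + C1)) with (eps := eps) as [M HM]; auto.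
  { intros x. apply (continuous_plus (V:=R_NormedModule) (fun y => Rabs (q y)));
      apply continuous_Rabs_fun; auto. }
  { intros x; unfold h; pose proof (Rabs_pos (q x)); pose proof (Rabs_pos (dq x)); lra. }
  { intros a b Hab. rewrite HI.
    pose proof (RInt_Rabs_le_of_int_abs_le _ _ HC0 Hc a b Hab).
    pose proof (RInt_Rabs_le_of_int_abs_le _ _ HC1 Hdc a b Hab). lra. }
  exists (M + 1). intros x Hx. rewrite Rminus_0_r.
  pose proof (Rabs_le_unit_W11 q dq Hd Hdc x).
  rewrite <- HI in H. specialize (HM (x - 1) x ltac:(lra)). lra.
Qed.

Lemma inA_lim_pinf0 (A : Aclass) (f : R -> R) : inA A f -> lim_pinf f 0.
Proof.
  intros [D [[D0 HD] HB]]. destruct A.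
  - destruct HB as [K HK]. intros eps He. exists (Rabs K + 1). intros x Hx.
    pose proof (Rle_abs K).
    rewrite Rminus_0_r, HK, Rabs_R0 by (rewrite Rabs_pos_eq; [lra|]; pose proof (Rabs_pos K); lra).
    lra.
  - destruct (HB 1%nat 0%nat) as [C HC]. intros eps He.
    assert (C0 : 0 <= C) by (specialize (HC 0); pose proof (Rabs_pos (0 ^ 1 * D 0%nat 0)); lra).
    exists (C / eps + 1). intros x Hx.
    assert (Cx : 0 < x) by (assert (0 <= C / eps) by (apply Rdiv_le_0_compat; lra); lra).
    specialize (HC x). rewrite D0, Rabs_mult, pow_1, Rabs_pos_eq in HC by lra. rewrite Rminus_0_r.
    assert (C < x * eps).
    { apply (Rmult_lt_reg_r (/ eps)); [apply Rinv_0_lt_compat; lra|].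
      replace (x * eps * / eps) with x by (field; lra). unfold Rdiv in Hx. lra. }
    nra.
  - destruct (HB 0%nat) as [C0 HC0]. destruct (HB 1%nat) as [C1 HC1].
    apply (lim_pinf_ext (D 0%nat)); auto.
    apply (lim_pinf0_of_W11 _ (D 1%nat) C0 C1); auto.
    apply (derivable_pt_lim_continuous _ (D 2%nat)). intros; apply HD.
Qed.

Lemma inA1_vanishes_minf (A : Aclass) (f : R -> R) : inA1 A f -> vanishes_minf f.
Proof.
  intros [g [HA Hg]] eps He.
  assert (Hc := inA_continuous A g HA). destruct (inA_L1_bounded A g HA) as [K HK].
  destruct (RInt_nonneg_tail_minf _ K (continuous_Rabs_fun g Hc) (fun x => Rabs_pos (g x)) HK
              (eps / 2) ltac:(lra)) as [M0 HM0].
  exists M0. intros x Hx.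
  destruct (Hg x (eps / 2) ltac:(lra)) as [M' HM'].
  destruct (HM' (Rmin M' x) (Rmin_l _ _) (Rmin_r _ _)) as [pr Hpr].
  rewrite RInt_of_Riemann in Hpr.
  assert (Rabs (RInt g (Rmin M' x) x) <= RInt (fun t => Rabs (g t)) (Rmin M' x) x).
  { apply abs_RInt_le; [apply Rmin_r|]. apply ex_RInt_continuous_R; auto. }
  assert (RInt (fun t => Rabs (g t)) (Rmin M' x) x < eps / 2) by (apply HM0; split; auto; apply Rmin_r).
  replace (f x) with (- (RInt g (Rmin M' x) x - f x) + RInt g (Rmin M' x) x) by ring.
  eapply Rle_lt_trans; [apply Rabs_triang|]. rewrite Rabs_Ropp. lra.
Qed.

Lemma inA1_increment (A : Aclass) (f : R -> R) :
  inA1 A f -> exists g, (forall y, continuous g y) /\ forall x y, f x - f y = RInt g y x.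
Proof.
  intros [g [HA Hg]]. exists g. assert (Hc := inA_continuous A g HA). split; auto.
  intros x y. apply Rminus_diag_uniq, eq0_of_Rabs_lt_all. intros eps He.
  destruct (Hg x (eps / 2) ltac:(lra)) as [Mx HMx].
  destruct (Hg y (eps / 2) ltac:(lra)) as [My HMy].
  set (a := Rmin (Rmin Mx My) (Rmin x y)).
  assert (a <= Mx /\ a <= My /\ a <= x /\ a <= y) as [A1 [A2 [A3 A4]]].
  { unfold a. pose proof (Rmin_l (Rmin Mx My) (Rmin x y)). pose proof (Rmin_r (Rmin Mx My) (Rmin x y)).
    pose proof (Rmin_l Mx My). pose proof (Rmin_r Mx My). pose proof (Rmin_l x y). pose proof (Rmin_r x y).
    repeat split; lra. }
  destruct (HMx a A1 A3) as [prx Hx]. destruct (HMy a A2 A4) as [pry Hy].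
  rewrite RInt_of_Riemann in Hx, Hy.
  rewrite <- (RInt_Chasles_sub g a y x Hc).
  replace (f x - f y - (RInt g a x - RInt g a y)) with (- (RInt g a x - f x) + (RInt g a y - f y)) by ring.
  eapply Rle_lt_trans; [apply Rabs_triang|]. rewrite Rabs_Ropp. lra.
Qed.

Lemma inA1_derivative_continuous (A : Aclass) (f df : R -> R) :
  inA1 A f -> (forall x, derivable_pt_lim f x (df x)) -> forall x, continuous df x.
Proof.
  intros HA Hd x0. destruct (inA1_increment A f HA) as [g [Hc Hfg]].
  assert (E : forall x, g x = df x).
  { intros x. symmetry. apply (uniqueness_limite f x); auto.
    apply (derivable_pt_lim_ext (fun b => f 0 + RInt g 0 b)); [intros b; rewrite <- (Hfg b 0); ring|].
    replace (g x) with (0 + g x) by ring.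
    apply (derivable_pt_lim_plus (fun _ => f 0)); [apply derivable_pt_lim_const|].
    apply derivable_pt_lim_RInt; auto. }
  apply (continuous_ext g); auto.
Qed.

Lemma inDiffA_has_shift0 (A : Aclass) (phi : R -> R) : inDiffA A phi -> has_shift phi 0.
Proof.
  intros [f [Hf [Hpf _]]]. apply (lim_pinf_ext f); [intros; rewrite Hpf; ring|].
  apply (inA_lim_pinf0 A f Hf).
Qed.

Lemma inDiffA1_shift_vanishes_minf (A : Aclass) (phi : R -> R) :
  inDiffA1 A phi -> vanishes_minf (fun x => phi x - x).
Proof.
  intros [f [Hf [Hpf _]]]. apply (vanishes_minf_ext f); [intros; rewrite Hpf; ring|].
  apply (inA1_vanishes_minf A f Hf).
Qed.

Lemma inDiffA1_derivative_pos (A : Aclass) (phi : R -> R) (x l : R) :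
  inDiffA1 A phi -> derivable_pt_lim phi x l -> 0 < l.
Proof.
  intros [f [_ [Hpf Hl]]] Hphi. destruct (Hl x) as [l' [Hfl Hl']].
  assert (E : l = 1 + l').
  { apply (uniqueness_limite phi x); auto.
    apply (derivable_pt_lim_ext (fun y => y + f y)); [intros; rewrite Hpf; auto|].
    apply (derivable_pt_lim_plus (fun y => y) f x 1 l'); auto. apply derivable_pt_lim_id. }
  lra.
Qed.

Lemma integral_R_unique (f : R -> R) (l1 l2 : R) : integral_R f l1 -> integral_R f l2 -> l1 = l2.
Proof.
  intros H1 H2. apply Rminus_diag_uniq, eq0_of_Rabs_lt_all. intros eps He.
  destruct (H1 (eps / 2) ltac:(lra)) as [M1 [_ HM1]]. destruct (H2 (eps / 2) ltac:(lra)) as [M2 [_ HM2]].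
  set (M := Rmax (Rabs M1) (Rabs M2)).
  pose proof (Rmax_l (Rabs M1) (Rabs M2)). pose proof (Rmax_r (Rabs M1) (Rabs M2)).
  pose proof (Rle_abs M1). pose proof (Rle_abs M2).
  destruct (HM1 (- M) M) as [pr1 Hp1]; [unfold M; lra | unfold M; lra|].
  destruct (HM2 (- M) M) as [pr2 Hp2]; [unfold M; lra | unfold M; lra|].
  rewrite (RiemannInt_P5 pr2 pr1) in Hp2.
  replace (l1 - l2) with (- (RiemannInt pr1 - l1) + (RiemannInt pr1 - l2)) by ring.
  eapply Rle_lt_trans; [apply Rabs_triang|]. rewrite Rabs_Ropp. lra.
Qed.

Lemma integral_R_scal_ext (f g : R -> R) (c l : R) :
  (forall x, f x = c * g x) -> integral_R g l -> integral_R f (c * l).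
Proof.
  intros Efg Hg eps He.
  destruct (Hg _ (lincomb_eps_pos c 0 eps He)) as [M [HM Hint]].
  exists M. split; auto. intros a b Ha Hb.
  destruct (Hint a b Ha Hb) as [prg Hprg].
  assert (prc : Riemann_integrable (fun x => c * g x) a b) by (apply Riemann_integrable_scal, prg).
  assert (prf : Riemann_integrable f a b)
    by (apply (Riemann_integrable_ext (fun x => c * g x)); [intros; auto | exact prc]).
  exists prf.
  rewrite (RiemannInt_ext f (fun x => c * g x) a b prf prc) by (intros; auto).
  rewrite (RiemannInt_scal g a b c prg prc).
  replace (c * RiemannInt prg - c * l) with (c * (RiemannInt prg - l) + 0 * 0) by ring.
  apply Rabs_lincomb_lt; auto. rewrite Rabs_R0 at 1. exact (lincomb_eps_pos c 0 eps He).
Qed.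

Lemma lim_pinf_of_increment (Q g p : R -> R) (c l : R) :
  vanishes_minf Q -> tends_minf p -> tends_pinf p ->
  (forall x y, Q x - Q y = c * RInt g (p y) (p x)) -> integral_R g l ->
  lim_pinf Q (c * l).
Proof.
  intros HQ Hm Hp Hinc Hg eps He.
  assert (He' := lincomb_eps_pos 1 c eps He).
  destruct (Hg _ He') as [M [_ HM]].
  destruct (HQ _ He') as [My HMy].
  destruct (Hm (- M)) as [Y HY]. destruct (Hp M) as [X HX].
  exists X. intros x Hx.
  set (y := Rmin My Y). pose proof (Rmin_l My Y). pose proof (Rmin_r My Y).
  destruct (HM (p y) (p x)) as [pr Hpr]; [apply HY; unfold y; lra | specialize (HX x Hx); lra|].
  rewrite RInt_of_Riemann in Hpr.
  replace (Q x - c * l) with (1 * Q y + c * (RInt g (p y) (p x) - l)) by (rewrite Rmult_minus_distr_l, <- Hinc; ring).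
  apply Rabs_lincomb_lt; auto.
Qed.

Lemma increment_of_derive_comp (Q p dp g : R -> R) (c : R) :
  (forall x, continuous g x) -> (forall x, derivable_pt_lim p x (dp x)) ->
  (forall x, derivable_pt_lim Q x (c * g (p x) * dp x)) ->
  forall x y, Q x - Q y = c * RInt g (p y) (p x).
Proof.
  intros Hg Hp HQ x y.
  set (F := fun z => RInt g 0 z).
  assert (HF : forall z, derivable_pt_lim F z (g z)) by (apply derivable_pt_lim_RInt; auto).
  assert (HG : forall z, derivable_pt_lim (fun z => 1 * Q z + (- c) * F (p z)) z 0).
  { intros z. replace 0 with (1 * (c * g (p z) * dp z) + (- c) * (g (p z) * dp z)) by ring.
    apply derivable_pt_lim_lincomb; auto.
    apply (derivable_pt_lim_comp p F z (dp z) (g (p z))); auto. }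
  pose proof (eq_of_derive0 _ HG x y) as E. cbv beta in E.
  rewrite <- (RInt_Chasles_sub g 0 (p y) (p x) Hg). fold (F (p x)) (F (p y)). lra.
Qed.

Definition cont_in (J : R -> Prop) (f : R -> R) (t : R) : Prop :=
  forall eps, eps > 0 -> exists d, d > 0 /\
    forall h, Rabs h < d -> J (t + h) -> Rabs (f (t + h) - f t) < eps.

Lemma deriv_in_cont_in (J : R -> Prop) (f : R -> R) (t l : R) : deriv_in J f t l -> cont_in J f t.
Proof.
  intros H eps He. destruct (H 1 ltac:(lra)) as [d [Hd Hq]].
  assert (Hl : 0 < Rabs l + 1) by (pose proof (Rabs_pos l); lra).
  exists (Rmin d (eps / (Rabs l + 1))). split.
  { apply Rmin_glb_lt; auto. apply Rdiv_lt_0_compat; lra. }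
  intros h Hh Jh.
  destruct (Req_dec h 0) as [->|Hn].
  { rewrite Rplus_0_r, Rminus_diag, Rabs_R0; lra. }
  assert (Hh1 : Rabs h < d) by (eapply Rlt_le_trans; [exact Hh | apply Rmin_l]).
  assert (Hh2 : Rabs h < eps / (Rabs l + 1)) by (eapply Rlt_le_trans; [exact Hh | apply Rmin_r]).
  specialize (Hq h Hn Hh1 Jh).
  set (q := (f (t + h) - f t) / h) in *.
  replace (f (t + h) - f t) with (h * q) by (unfold q; field; auto). rewrite Rabs_mult.
  assert (Rabs q <= Rabs l + 1).
  { replace q with (l + (q - l)) by ring. eapply Rle_trans; [apply Rabs_triang|]. lra. }
  assert (Rabs h * (Rabs l + 1) < eps).
  { apply (Rmult_lt_compat_r (Rabs l + 1)) in Hh2; auto.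
    unfold Rdiv in Hh2. rewrite Rmult_assoc, Rinv_l in Hh2; lra. }
  pose proof (Rabs_pos h). pose proof (Rabs_pos q). nra.
Qed.

Lemma derivable_pt_lim_of_deriv_in (J : R -> Prop) (f : R -> R) (a b t l : R) :
  a < t < b -> (forall s, a < s < b -> J s) -> deriv_in J f t l -> derivable_pt_lim f t l.
Proof.
  intros Ht HJ H eps He. destruct (H eps He) as [d [Hd Hq]].
  assert (Hm : 0 < Rmin d (Rmin (t - a) (b - t))) by (repeat apply Rmin_glb_lt; lra).
  exists (mkposreal _ Hm). simpl. intros h Hh Hhd.
  pose proof (Rmin_l d (Rmin (t - a) (b - t))); pose proof (Rmin_r d (Rmin (t - a) (b - t))).
  pose proof (Rmin_l (t - a) (b - t)); pose proof (Rmin_r (t - a) (b - t)).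
  apply Hq; auto; [lra|]. apply HJ. apply Rabs_def2 in Hhd. lra.
Qed.

Lemma derivable_pt_lim_diff_quotient (f g d : R -> R) (df dg dd h y : R) :
  derivable_pt_lim f y df -> derivable_pt_lim g y dg -> derivable_pt_lim d y dd ->
  derivable_pt_lim (fun z => (f z - g z) / h - d z) y ((df - dg) / h - dd).
Proof.
  intros Hf Hg Hd.
  replace ((df - dg) / h - dd) with ((df - dg) * (fun _ : R => / h) y + (f y - g y) * 0 - dd)
    by (unfold Rdiv; ring).
  exact (derivable_pt_lim_minus _ _ y _ _
     (derivable_pt_lim_mult _ _ y _ _ (derivable_pt_lim_minus _ _ y _ _ Hf Hg)
        (derivable_pt_lim_const (/ h) y)) Hd).
Qed.

(* Every seminorm of A(R) dominates pointwise evaluation (for W^{oo,1} through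
   the Sobolev bound), so a smooth curve in A(R) is pointwise differentiable in time. *)
Lemma smooth_curve_deriv_in (A : Aclass) (J : R -> Prop) (C : nat -> R -> nat -> R -> R) :
  smooth_curve_A A J C ->
  forall m t x, J t -> deriv_in J (fun s => C m s 0%nat x) t (C (S m) t 0%nat x).
Proof.
  intros [Hder [Hquot _]] m t x Jt eps Heps.
  destruct A.
  - destruct (Hquot m t Jt 0%nat 0%nat (eps / 2)) as [d [Hd Hq]]; [lra|].
    exists d; split; auto. intros h Hh Hhd Jth.
    specialize (Hq h Hh Hhd Jth x). simpl in Hq. lra.
  - destruct (Hquot m t Jt 0%nat 0%nat (eps / 2)) as [d [Hd Hq]]; [lra|].
    exists d; split; auto. intros h Hh Hhd Jth.
    specialize (Hq h Hh Hhd Jth x). simpl in Hq. rewrite Rmult_1_l in Hq. lra.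
  - destruct (Hquot m t Jt 0%nat 0%nat (eps / 3)) as [d0 [Hd0 Hq0]]; [lra|].
    destruct (Hquot m t Jt 1%nat 0%nat (eps / 3)) as [d1 [Hd1 Hq1]]; [lra|].
    exists (Rmin d0 d1); split; [apply Rmin_glb_lt; auto|].
    intros h Hh Hhd Jth.
    assert (Hhd0 : Rabs h < d0) by (eapply Rlt_le_trans; [exact Hhd | apply Rmin_l]).
    assert (Hhd1 : Rabs h < d1) by (eapply Rlt_le_trans; [exact Hhd | apply Rmin_r]).
    specialize (Hq0 h Hh Hhd0 Jth). specialize (Hq1 h Hh Hhd1 Jth). simpl in Hq0, Hq1.
    destruct (Hder m (t + h) Jth) as [[_ Da] _].
    destruct (Hder m t Jt) as [[_ Db] _].
    destruct (Hder (S m) t Jt) as [[_ Dc] _].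
    set (q := fun k y => (C m (t + h) k y - C m t k y) / h - C (S m) t k y).
    assert (Hd : forall k y, derivable_pt_lim (q k) y (q (S k) y))
      by (intros k y; apply derivable_pt_lim_diff_quotient; auto).
    assert (Hc0 := derivable_pt_lim_continuous _ _ (Hd 0%nat)).
    assert (Hc1 := derivable_pt_lim_continuous _ _ (Hd 1%nat)).
    pose proof (Rabs_le_unit_W11 _ _ (Hd 0%nat) Hc1 x).
    pose proof (RInt_Rabs_le_of_int_abs_le _ _ Hq0 Hc0 (x - 1) x ltac:(lra)).
    pose proof (RInt_Rabs_le_of_int_abs_le _ _ Hq1 Hc1 (x - 1) x ltac:(lra)).
    unfold q in *. lra.
Qed.

Lemma Rabs_sqrt_sub_le (a b : R) : 0 <= a -> 0 < b -> Rabs (sqrt a - sqrt b) * sqrt b <= Rabs (a - b).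
Proof.
  intros Ha Hb.
  assert (Sa : 0 <= sqrt a) by apply sqrt_pos. assert (Sb : 0 < sqrt b) by (apply sqrt_lt_R0; auto).
  assert (E : a - b = (sqrt a - sqrt b) * (sqrt a + sqrt b)).
  { rewrite <- (sqrt_sqrt a) at 1 by lra. rewrite <- (sqrt_sqrt b) at 1 by lra. ring. }
  rewrite E, Rabs_mult, (Rabs_pos_eq (sqrt a + sqrt b)) by lra.
  pose proof (Rabs_pos (sqrt a - sqrt b)). nra.
Qed.

Lemma cont_in_sqrt (J : R -> Prop) (c : R -> R) (t : R) :
  cont_in J c t -> (forall s, J s -> 0 <= 1 + c s) -> 0 < 1 + c t ->
  cont_in J (fun s => sqrt (1 + c s)) t.
Proof.
  intros Hc Hpos Ht eps He.
  assert (Sb : 0 < sqrt (1 + c t)) by (apply sqrt_lt_R0; auto).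
  destruct (Hc (eps * sqrt (1 + c t))) as [d [Hd Hcd]]; [apply Rmult_lt_0_compat; lra|].
  exists d. split; auto. intros h Hh Jh.
  specialize (Hcd h Hh Jh). pose proof (Rabs_sqrt_sub_le _ _ (Hpos _ Jh) Ht).
  replace (1 + c (t + h) - (1 + c t)) with (c (t + h) - c t) in * by ring.
  apply (Rmult_lt_reg_r (sqrt (1 + c t))); lra.
Qed.

Lemma affine_at_boundary (J : R -> Prop) (a b p q t0 : R) (f : R -> R) :
  a < b -> (forall t, a < t < b -> J t) -> (forall t, J t -> a <= t <= b) -> J t0 ->
  cont_in J f t0 -> (forall t, a < t < b -> f t = p + t * q) -> f t0 = p + t0 * q.
Proof.
  intros Hab Hint Hcl Jt0 Hc Haff. apply Rminus_diag_uniq, eq0_of_Rabs_lt_all. intros eps He.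
  destruct (Hc (eps / 2)) as [d [Hd Hcd]]; [lra|].
  pose proof (Hcl t0 Jt0) as Ht0.
  assert (Hdel : 0 < Rmin d (eps / 2)) by (apply Rmin_glb_lt; lra).
  pose proof (Rmin_l d (eps / 2)); pose proof (Rmin_r d (eps / 2)).
  (* move from t0 a fraction lam of the way towards the midpoint of (a, b) *)
  assert (Hlam : exists lam, (0 < lam <= 1 / 2) /\
            lam * ((Rabs q + 1) * (Rabs ((a + b) / 2 - t0) + 1)) < Rmin d (eps / 2)).
  { set (r := (Rabs q + 1) * (Rabs ((a + b) / 2 - t0) + 1)).
    assert (Hr : 0 < r)
      by (unfold r; pose proof (Rabs_pos q); pose proof (Rabs_pos ((a + b) / 2 - t0)); nra).
    exists (Rmin (1 / 2) (Rmin d (eps / 2) / (2 * r))). repeat split.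
    - apply Rmin_glb_lt; [lra | apply Rdiv_lt_0_compat; lra].
    - apply Rmin_l.
    - apply (Rle_lt_trans _ (Rmin d (eps / 2) / (2 * r) * r)).
      + apply Rmult_le_compat_r; [lra | apply Rmin_r].
      + replace (Rmin d (eps / 2) / (2 * r) * r) with (Rmin d (eps / 2) / 2) by (field; lra). lra. }
  destruct Hlam as [lam [Hlam Hlam_r]].
  set (h := lam * ((a + b) / 2 - t0)).
  assert (Hh : Rabs h * (Rabs q + 1) < Rmin d (eps / 2)).
  { unfold h. rewrite Rabs_mult, Rabs_pos_eq by lra.
    pose proof (Rabs_pos q). pose proof (Rabs_pos ((a + b) / 2 - t0)). nra. }
  assert (Hth : a < t0 + h < b).
  { assert (P1 : 0 <= (1 - lam) * (t0 - a)) by (apply Rmult_le_pos; lra).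
    assert (P2 : 0 <= (1 - lam) * (b - t0)) by (apply Rmult_le_pos; lra).
    assert (P3 : 0 < lam * (b - a)) by (apply Rmult_lt_0_compat; lra).
    unfold h. clear -P1 P2 P3. lra. }
  clearbody h.
  assert (Hhq : 0 <= Rabs h * Rabs q) by (apply Rmult_le_pos; apply Rabs_pos).
  assert (Hhd : Rabs h < d) by lra.
  specialize (Hcd h Hhd (Hint _ Hth)). rewrite (Haff _ Hth) in Hcd.
  assert (Rabs (h * q) < eps / 2) by (rewrite Rabs_mult; pose proof (Rabs_pos h); lra).
  replace (f t0 - (p + t0 * q)) with (- (p + (t0 + h) * q - f t0) + h * q) by ring.
  eapply Rle_lt_trans; [apply Rabs_triang|]. rewrite Rabs_Ropp. lra.
Qed.

Lemma sqrt_derive_const_of_geodesic_ode (a b : R) (c c1 c2 : R -> R) :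
  (forall t, a < t < b -> derivable_pt_lim c t (c1 t)) ->
  (forall t, a < t < b -> derivable_pt_lim c1 t (c2 t)) ->
  (forall t, a < t < b -> c2 t = / 2 * (c1 t) ^ 2 / (1 + c t)) ->
  (forall t, a < t < b -> 0 < 1 + c t) -> a < b ->
  exists m, forall t, a < t < b -> derivable_pt_lim (fun t => sqrt (1 + c t)) t m.
Proof.
  intros Hc Hc1 Heq Hpos Hab.
  assert (Ds : forall t, a < t < b ->
            derivable_pt_lim (fun t => sqrt (1 + c t)) t (c1 t / (2 * sqrt (1 + c t)))).
  { intros t Ht.
    replace (c1 t / (2 * sqrt (1 + c t))) with (/ (2 * sqrt (1 + c t)) * (0 + c1 t)) by (unfold Rdiv; ring).
    exact (derivable_pt_lim_comp (fun t => 1 + c t) sqrt t (0 + c1 t) _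
       (derivable_pt_lim_plus _ _ t _ _ (derivable_pt_lim_const 1 t) (Hc t Ht))
       (derivable_pt_lim_sqrt _ (Hpos t Ht))). }
  assert (Dg : forall t, a < t < b -> derivable_pt_lim (fun t => c1 t / sqrt (1 + c t)) t 0).
  { intros t Ht.
    assert (Hs : 0 < sqrt (1 + c t)) by (apply sqrt_lt_R0; auto).
    assert (Hs2 : sqrt (1 + c t) * sqrt (1 + c t) = 1 + c t) by (apply sqrt_sqrt; specialize (Hpos t Ht); lra).
    assert (H := derivable_pt_lim_div c1 (fun t => sqrt (1 + c t)) t _ _ (Hc1 t Ht) (Ds t Ht) ltac:(lra)).
    match type of H with derivable_pt_lim _ _ ?L => replace 0 with L; [exact H|] end.
    rewrite (Heq t Ht). unfold Rsqr. set (S := sqrt (1 + c t)) in *. rewrite <- Hs2. field. lra. }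
  set (t0 := (a + b) / 2). assert (Ht0 : a < t0 < b) by (unfold t0; lra).
  exists (c1 t0 / (2 * sqrt (1 + c t0))). intros t Ht.
  replace (c1 t0 / (2 * sqrt (1 + c t0))) with (c1 t / (2 * sqrt (1 + c t))); [auto|].
  assert (E := eq_of_derive0_on a b _ Dg t t0 Ht Ht0). cbv beta in E.
  assert (0 < sqrt (1 + c t)) by (apply sqrt_lt_R0; auto).
  assert (0 < sqrt (1 + c t0)) by (apply sqrt_lt_R0; auto).
  unfold Rdiv in *. rewrite Rinv_mult, Rinv_mult, <- !Rmult_assoc, (Rmult_comm (c1 t)), (Rmult_comm (c1 t0)),
    !Rmult_assoc, E. reflexivity.
Qed.

(** * Geodesics *)

Record sqrt_affine_flow (J : R -> Prop) (phi : R -> R -> R) (w k : R -> R) : Prop := {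
  saf_pos : forall t x, J t -> 0 < w x + t * k x;
  saf_deriv : forall t x, J t -> derivable_pt_lim (phi t) x ((w x + t * k x) ^ 2);
  saf_vanish : forall t, J t -> vanishes_minf (fun x => phi t x - x);
  saf_k_cont : forall x, continuous k x }.

Lemma geodesic_sqrt_affine (A : Aclass) (J : R -> Prop) (a b : R) (phi : R -> R -> R) :
  a < b -> (forall t, a < t < b -> J t) -> (forall t, J t -> a <= t <= b) ->
  is_geodesic A J phi -> exists w k, sqrt_affine_flow J phi w k.
Proof.
  intros Hab Hint Hcl [C [Hsm [HD [Hd Hgeq]]]].
  assert (Hpos : forall t x, J t -> 0 < 1 + C 0%nat t 0%nat x)
    by (intros t x Jt; exact (inDiffA1_derivative_pos A _ x _ (HD t Jt) (Hd t x Jt))).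
  assert (Hder : forall m t x, a < t < b ->
            derivable_pt_lim (fun s => C m s 0%nat x) t (C (S m) t 0%nat x)).
  { intros m t x Ht. apply (derivable_pt_lim_of_deriv_in J _ a b); auto.
    apply smooth_curve_deriv_in with (A := A); auto. }
  set (s1 := (2 * a + b) / 3). set (s2 := (a + 2 * b) / 3).
  assert (Hs1 : a < s1 < b) by (unfold s1; lra). assert (Hs2 : a < s2 < b) by (unfold s2; lra).
  assert (Hs12 : s2 - s1 <> 0) by (unfold s1, s2; lra).
  set (g := fun x t => sqrt (1 + C 0%nat t 0%nat x)).
  set (k := fun x => (g x s2 - g x s1) / (s2 - s1)).
  set (w := fun x => g x s1 - s1 * k x).
  assert (Hopen : forall x t, a < t < b -> g x t = w x + t * k x).
  { intros x t Ht.
    destruct (sqrt_derive_const_of_geodesic_ode a b (fun s => C 0%nat s 0%nat x)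
                (fun s => C 1%nat s 0%nat x) (fun s => C 2%nat s 0%nat x)) as [m Hm]; auto.
    pose proof (affine_of_derive_const a b m _ Hm s1 t Hs1 Ht) as Et.
    pose proof (affine_of_derive_const a b m _ Hm s1 s2 Hs1 Hs2) as E2.
    unfold w, k, g in *. rewrite Et, E2. field. auto. }
  assert (Haff : forall t x, J t -> g x t = w x + t * k x).
  { intros t x Jt. apply (affine_at_boundary J a b (w x) (k x) t (g x)); auto.
    apply cont_in_sqrt; [| intros s Js; left; apply Hpos; auto | apply Hpos; auto].
    apply (deriv_in_cont_in _ _ _ (C 1%nat t 0%nat x)).
    apply smooth_curve_deriv_in with (A := A); auto. }
  assert (Hg_cont : forall s x, a < s < b -> continuous (fun y => g y s) x).
  { intros s x Hs. apply continuous_sqrt_comp.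
    apply (continuous_plus (V:=R_NormedModule) (fun _ => 1)); [apply continuous_const|].
    destruct Hsm as [Hsm _]. destruct (Hsm 0%nat s (Hint s Hs)) as [[_ Hds] _].
    apply (derivable_pt_lim_continuous _ (C 0%nat s 1%nat)), Hds. }
  exists w, k. split.
  - intros t x Jt. rewrite <- Haff by auto. apply sqrt_lt_R0, Hpos; auto.
  - intros t x Jt. rewrite <- Haff by auto. unfold g. rewrite pow2_sqrt; [apply Hd; auto|].
    left; apply Hpos; auto.
  - intros t Jt. apply (inDiffA1_shift_vanishes_minf A), HD; auto.
  - intros x. unfold k. apply (continuous_mult (K:=R_AbsRing) (fun y => g y s2 - g y s1)).
    + apply (continuous_minus (V:=R_NormedModule)); apply Hg_cont; auto.
    + apply continuous_const.
Qed.

Record quadratic_flow (J : R -> Prop) (phi : R -> R -> R) (w k P Q : R -> R) : Prop := {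
  qf_sqrt_affine : sqrt_affine_flow J phi w k;
  qf_dP : forall x, derivable_pt_lim P x (2 * w x * k x);
  qf_dQ : forall x, derivable_pt_lim Q x (k x ^ 2);
  qf_P_vanish : vanishes_minf P;
  qf_Q_vanish : vanishes_minf Q;
  qf_eq : forall t x, J t -> phi t x = phi 0 x + t * P x + t ^ 2 * Q x }.

(* P and Q are the finite-difference coefficients of the three samples phi 0, phi h, phi (2h);
   the representation then holds for all t because both sides have the same x-derivative
   and vanish at -oo. *)
Lemma quadratic_flow_of_sqrt_affine (J : R -> Prop) (phi : R -> R -> R) (w k : R -> R) (h : R) :
  sqrt_affine_flow J phi w k -> h <> 0 -> J 0 -> J h -> J (2 * h) ->
  exists P Q, quadratic_flow J phi w k P Q.
Proof.
  intros Hsa Hh J0 Jh J2h.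
  set (D := fun t x => 1 * phi t x + (-1) * phi 0 x).
  assert (HDd : forall t x, J t -> derivable_pt_lim (D t) x (2 * t * w x * k x + t ^ 2 * k x ^ 2)).
  { intros t x Jt. replace (2 * t * w x * k x + t ^ 2 * k x ^ 2)
      with (1 * (w x + t * k x) ^ 2 + (-1) * (w x + 0 * k x) ^ 2) by ring.
    apply derivable_pt_lim_lincomb; apply (saf_deriv _ _ _ _ Hsa); auto. }
  assert (HDv : forall t, J t -> vanishes_minf (D t)).
  { intros t Jt. apply (vanishes_minf_ext (fun x => 1 * (phi t x - x) + (-1) * (phi 0 x - x))).
    { intros; unfold D; ring. }
    apply vanishes_minf_lincomb; apply (saf_vanish _ _ _ _ Hsa); auto. }
  set (P := fun x => (2 / h) * D h x + (- / (2 * h)) * D (2 * h) x).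
  set (Q := fun x => (- / h ^ 2) * D h x + (/ (2 * h ^ 2)) * D (2 * h) x).
  assert (HP : forall x, derivable_pt_lim P x (2 * w x * k x)).
  { intros x. unfold P.
    match goal with |- derivable_pt_lim _ _ ?L => replace L with
      ((2 / h) * (2 * h * w x * k x + h ^ 2 * k x ^ 2)
       + (- / (2 * h)) * (2 * (2 * h) * w x * k x + (2 * h) ^ 2 * k x ^ 2)) by (field; auto) end.
    apply derivable_pt_lim_lincomb; apply HDd; auto. }
  assert (HQ : forall x, derivable_pt_lim Q x (k x ^ 2)).
  { intros x. unfold Q.
    match goal with |- derivable_pt_lim _ _ ?L => replace L with
      ((- / h ^ 2) * (2 * h * w x * k x + h ^ 2 * k x ^ 2)
       + (/ (2 * h ^ 2)) * (2 * (2 * h) * w x * k x + (2 * h) ^ 2 * k x ^ 2)) by (field; auto) end.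
    apply derivable_pt_lim_lincomb; apply HDd; auto. }
  assert (HPv : vanishes_minf P) by (apply vanishes_minf_lincomb; apply HDv; auto).
  assert (HQv : vanishes_minf Q) by (apply vanishes_minf_lincomb; apply HDv; auto).
  exists P, Q. split; auto.
  intros t x Jt.
  set (H := fun y => 1 * (1 * D t y + (- t) * P y) + (- t ^ 2) * Q y).
  assert (HH : forall y, derivable_pt_lim H y 0).
  { intros y. unfold H.
    replace 0 with (1 * (1 * (2 * t * w y * k y + t ^ 2 * k y ^ 2) + (- t) * (2 * w y * k y))
                    + (- t ^ 2) * k y ^ 2) by ring.
    repeat apply derivable_pt_lim_lincomb; auto. }
  assert (HHv : vanishes_minf H)
    by (apply vanishes_minf_lincomb; [apply vanishes_minf_lincomb; [apply HDv|]|]; auto).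
  pose proof (eq0_of_derive0_vanishes_minf H HH HHv x) as E. unfold H, D in E. lra.
Qed.

Lemma quadratic_flow_of_geodesic (A : Aclass) (J : R -> Prop) (a b h : R) (phi : R -> R -> R) :
  a < b -> (forall t, a < t < b -> J t) -> (forall t, J t -> a <= t <= b) ->
  0 < h -> J 0 -> J (2 * h) -> is_geodesic A J phi ->
  exists w k P Q, quadratic_flow J phi w k P Q.
Proof.
  intros Hab Hint Hcl Hh J0 J2h Hgeo.
  destruct (geodesic_sqrt_affine A J a b phi Hab Hint Hcl Hgeo) as [w [k Hsa]].
  pose proof (Hcl 0 J0). pose proof (Hcl (2 * h) J2h).
  destruct (quadratic_flow_of_sqrt_affine J phi w k h Hsa ltac:(lra) J0 (Hint h ltac:(lra)) J2h)
    as [P [Q Hq]].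
  exists w, k, P, Q. exact Hq.
Qed.

(** * Geodesics on an open time interval around 0 *)

Section OpenTimeInterval.

Variables (alpha beta : R) (phi : R -> R -> R) (w k P Q : R -> R).
Local Notation J := (fun t => alpha < t < beta).
Hypothesis time_interval : alpha < 0 < beta.
Hypothesis flow : quadratic_flow J phi w k P Q.

Let sqrt_affine : sqrt_affine_flow J phi w k := qf_sqrt_affine _ _ _ _ _ _ flow.

Lemma flow_time_derivative (t x l : R) :
  J t -> deriv_in J (fun s => phi s x) t l -> l = P x + 2 * t * Q x.
Proof.
  intros Jt Hl. apply (uniqueness_limite (fun s => phi 0 x + s * P x + s ^ 2 * Q x) t).
  - apply (derivable_pt_lim_locally_ext (fun s => phi s x) _ t alpha beta); auto.
    + intros s Js. apply (qf_eq _ _ _ _ _ _ flow); auto.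
    + apply (derivable_pt_lim_of_deriv_in J _ alpha beta); auto.
  - apply is_derive_Reals. auto_derive; auto. ring.
Qed.

Lemma flow_continuous (t : R) : J t -> forall x, continuous (phi t) x.
Proof.
  intros Jt. apply (derivable_pt_lim_continuous _ (fun x => (w x + t * k x) ^ 2)).
  intros; apply (saf_deriv _ _ _ _ sqrt_affine); auto.
Qed.

Lemma flow_phi0_deriv (x : R) : derivable_pt_lim (phi 0) x (w x ^ 2).
Proof.
  pose proof (saf_deriv _ _ _ _ sqrt_affine 0 x ltac:(lra)) as H.
  replace (w x + 0 * k x) with (w x) in H by ring. exact H.
Qed.

Lemma flow_tends_minf : tends_minf (phi 0).
Proof. apply vanishes_minf_shift_tends_minf, (saf_vanish _ _ _ _ sqrt_affine); lra. Qed.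

Variables (u0 du0 : R -> R) (uinf E S0 : R).
Hypothesis du0_deriv : forall x, derivable_pt_lim u0 x (du0 x).
Hypothesis du0_cont : forall x, continuous du0 x.
Hypothesis u0_lim : lim_pinf u0 uinf.
Hypothesis energy : integral_R (fun x => du0 x ^ 2) E.
Hypothesis init_velocity : forall x, deriv_in J (fun s => phi s x) 0 (u0 (phi 0 x)).
Hypothesis init_shift : has_shift (phi 0) S0.

Lemma flow_P_eq (x : R) : P x = u0 (phi 0 x).
Proof. rewrite (flow_time_derivative 0 x _ ltac:(lra) (init_velocity x)). ring. Qed.

(* Differentiating P = u0 o phi 0 gives 2 w k = du0 (phi 0) w^2. *)
Lemma flow_k_eq (x : R) : k x = du0 (phi 0 x) * w x / 2.
Proof.
  assert (Hw : 0 < w x) by (pose proof (saf_pos _ _ _ _ sqrt_affine 0 x ltac:(lra)); lra).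
  assert (E1 : 2 * w x * k x = du0 (phi 0 x) * w x ^ 2).
  { apply (uniqueness_limite P x); [apply (qf_dP _ _ _ _ _ _ flow)|].
    apply (derivable_pt_lim_ext (fun y => u0 (phi 0 y))); [intros; symmetry; apply flow_P_eq|].
    apply (derivable_pt_lim_comp (phi 0) u0 x); auto using flow_phi0_deriv. }
  apply (Rmult_eq_reg_l (2 * w x)); [|lra]. rewrite E1. field.
Qed.

Lemma flow_Q_increment (x y : R) :
  Q x - Q y = / 4 * RInt (fun z => du0 z ^ 2) (phi 0 y) (phi 0 x).
Proof.
  apply (increment_of_derive_comp Q (phi 0) (fun x => w x ^ 2)); [apply continuous_sqr_fun; auto | |].
  - apply flow_phi0_deriv.
  - intros z. replace (/ 4 * du0 (phi 0 z) ^ 2 * w z ^ 2) with (k z ^ 2) by (rewrite flow_k_eq; field).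
    apply (qf_dQ _ _ _ _ _ _ flow).
Qed.

Lemma flow_lim_Q : lim_pinf Q (/ 4 * E).
Proof.
  apply (lim_pinf_of_increment Q (fun z => du0 z ^ 2) (phi 0)); auto.
  - apply (qf_Q_vanish _ _ _ _ _ _ flow).
  - apply flow_tends_minf.
  - apply (has_shift_tends_pinf _ _ init_shift).
  - apply flow_Q_increment.
Qed.

Lemma flow_lim_P : lim_pinf P uinf.
Proof.
  apply (lim_pinf_ext (fun x => u0 (phi 0 x))); [intros; symmetry; apply flow_P_eq|].
  apply lim_pinf_comp; auto. apply (has_shift_tends_pinf _ _ init_shift).
Qed.

Lemma flow_shift (t : R) : J t -> has_shift (phi t) (S0 + t * uinf + t ^ 2 / 4 * E).
Proof.
  intros Jt.
  apply (lim_pinf_ext (fun x => 1 * (1 * (phi 0 x - x) + t * P x) + t ^ 2 * Q x)).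
  { intros x. rewrite (qf_eq _ _ _ _ _ _ flow t x Jt). ring. }
  replace (S0 + t * uinf + t ^ 2 / 4 * E) with (1 * (1 * S0 + t * uinf) + t ^ 2 * (/ 4 * E)) by field.
  repeat apply lim_pinf_lincomb; auto using flow_lim_P, flow_lim_Q.
Qed.

(* u t (phi t x) = P x + 2 t Q x, and phi t maps every neighbourhood of +oo onto one. *)
Lemma flow_velocity_lim (u : R -> R -> R) :
  (forall t x, J t -> deriv_in J (fun s => phi s x) t (u t (phi t x))) ->
  forall t, J t -> lim_pinf (u t) (uinf + t / 2 * E).
Proof.
  intros Hu t Jt eps He.
  assert (HL : lim_pinf (fun x => 1 * P x + (2 * t) * Q x) (1 * uinf + 2 * t * (/ 4 * E)))
    by (apply lim_pinf_lincomb; auto using flow_lim_P, flow_lim_Q).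
  destruct (HL eps He) as [X HX].
  exists (phi t X). intros y Hy.
  destruct (continuous_tends_pinf_hits (phi t) (flow_continuous t Jt)
              (has_shift_tends_pinf _ _ (flow_shift t Jt)) X y ltac:(lra)) as [x [Hx <-]].
  rewrite (flow_time_derivative t x _ Jt (Hu t x Jt)).
  replace (uinf + t / 2 * E) with (1 * uinf + 2 * t * (/ 4 * E)) by field.
  replace (P x + 2 * t * Q x) with (1 * P x + 2 * t * Q x) by ring. apply HX. lra.
Qed.

(* If E = 0 then Q (nondecreasing, 0 at both ends) vanishes, hence k = 0, P = 0 and u0 = 0. *)
Lemma flow_energy_neq0 : (exists x, u0 x <> 0) -> E <> 0.
Proof.
  intros [x0 Hx0] HE0.
  assert (HQ0 : forall x, Q x = 0).
  { apply eq0_of_nondecreasing_vanishing.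
    - apply (nondecreasing_of_derive_nonneg Q (fun x => k x ^ 2)); [apply (qf_dQ _ _ _ _ _ _ flow)|].
      intros; apply pow2_ge_0.
    - apply (qf_Q_vanish _ _ _ _ _ _ flow).
    - replace 0 with (/ 4 * E) by (rewrite HE0; ring). apply flow_lim_Q. }
  assert (Hk0 : forall x, k x = 0).
  { intros x. destruct (Req_dec (k x) 0) as [|Hne]; auto. exfalso.
    apply (pow_nonzero _ 2 Hne), (uniqueness_limite Q x); [apply (qf_dQ _ _ _ _ _ _ flow)|].
    apply (derivable_pt_lim_ext (fun _ => 0)); [intros; rewrite HQ0; auto | apply derivable_pt_lim_const]. }
  assert (HP0 : forall x, P x = 0).
  { apply eq0_of_derive0_vanishes_minf; [|apply (qf_P_vanish _ _ _ _ _ _ flow)].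
    intros x. replace 0 with (2 * w x * k x) by (rewrite Hk0; ring). apply (qf_dP _ _ _ _ _ _ flow). }
  destruct (continuous_tends_surjective (phi 0) (flow_continuous 0 ltac:(lra))
              (has_shift_tends_pinf _ _ init_shift) flow_tends_minf x0) as [x Hx].
  apply Hx0. rewrite <- Hx, <- flow_P_eq. auto.
Qed.

Lemma flow_at_most_two_times_in_DiffA (A : Aclass) : (exists x, u0 x <> 0) ->
  forall t1 t2 t3, J t1 -> J t2 -> J t3 ->
  inDiffA A (phi t1) -> inDiffA A (phi t2) -> inDiffA A (phi t3) -> t1 = t2 \/ t1 = t3 \/ t2 = t3.
Proof.
  intros Hnz t1 t2 t3 J1 J2 J3 D1 D2 D3.
  assert (Hroot : forall t, J t -> inDiffA A (phi t) -> S0 + t * uinf + t ^ 2 / 4 * E = 0).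
  { intros t Jt Dt. apply (lim_pinf_unique (fun x => phi t x - x));
      [apply flow_shift, Jt | apply (inDiffA_has_shift0 A), Dt]. }
  apply (quadratic_at_most_two_roots S0 uinf E); auto using flow_energy_neq0.
Qed.

Lemma flow_at_most_one_tangency (u : R -> R -> R) :
  (forall t x, J t -> deriv_in J (fun s => phi s x) t (u t (phi t x))) -> (exists x, u0 x <> 0) ->
  forall t1 t2, J t1 -> J t2 -> lim_pinf (u t1) 0 -> lim_pinf (u t2) 0 -> t1 = t2.
Proof.
  intros Hu Hnz t1 t2 J1 J2 L1 L2.
  apply (affine_at_most_one_root uinf E); auto using flow_energy_neq0;
    [apply (lim_pinf_unique (u t1)) | apply (lim_pinf_unique (u t2))]; auto using flow_velocity_lim.
Qed.

End OpenTimeInterval.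

(** * Geodesics between two elements of [Diff_A] *)

Section UnitTimeInterval.

Variables (phi : R -> R -> R) (w k P Q d0 d1 : R -> R) (N2 : R).
Local Notation J := (fun t => 0 <= t <= 1).
Hypothesis flow : quadratic_flow J phi w k P Q.
Hypothesis shift0 : has_shift (phi 0) 0.
Hypothesis shift1 : has_shift (phi 1) 0.
Hypothesis d0_deriv : forall x, derivable_pt_lim (phi 0) x (d0 x).
Hypothesis d1_deriv : forall x, derivable_pt_lim (phi 1) x (d1 x).
Hypothesis distance : integral_R (fun x => (sqrt (d0 x) - sqrt (d1 x)) ^ 2) N2.

Let sqrt_affine : sqrt_affine_flow J phi w k := qf_sqrt_affine _ _ _ _ _ _ flow.

Lemma flow_sqrt_endpoint (t : R) (d : R -> R) :
  J t -> (forall x, derivable_pt_lim (phi t) x (d x)) -> forall x, sqrt (d x) = w x + t * k x.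
Proof.
  intros Jt Hd x.
  rewrite (uniqueness_limite (phi t) x _ _ (Hd x) (saf_deriv _ _ _ _ sqrt_affine t x Jt)).
  apply sqrt_pow2. left; apply (saf_pos _ _ _ _ sqrt_affine); auto.
Qed.

Lemma flow_Q_increment_unit (x y : R) :
  Q x - Q y = 1 * RInt (fun z => (sqrt (d0 z) - sqrt (d1 z)) ^ 2) y x.
Proof.
  assert (Hk : forall z, (sqrt (d0 z) - sqrt (d1 z)) ^ 2 = k z ^ 2).
  { intros z. rewrite (flow_sqrt_endpoint 0 d0), (flow_sqrt_endpoint 1 d1); auto; lra. }
  rewrite (RInt_ext _ (fun z => k z ^ 2)) by (intros; apply Hk).
  apply (increment_of_derive_comp Q (fun z => z) (fun _ => 1)).
  - apply continuous_sqr_fun, (saf_k_cont _ _ _ _ sqrt_affine).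
  - intros; apply derivable_pt_lim_id.
  - intros z. replace (1 * k z ^ 2 * 1) with (k z ^ 2) by ring. apply (qf_dQ _ _ _ _ _ _ flow).
Qed.

(* phi t - Id = (phi 0 - Id) + t (phi 1 - phi 0 - Q) + t^2 Q, and Q tends to N2 at +oo. *)
Lemma flow_shift_unit (t : R) : J t -> has_shift (phi t) ((t ^ 2 - t) * N2).
Proof.
  intros Jt.
  assert (HQ : lim_pinf Q (1 * N2)).
  { apply (lim_pinf_of_increment Q (fun z => (sqrt (d0 z) - sqrt (d1 z)) ^ 2) (fun z => z));
      auto using flow_Q_increment_unit.
    - apply (qf_Q_vanish _ _ _ _ _ _ flow).
    - intros M. exists M. auto.
    - intros M. exists M. auto. }
  assert (HP : forall x, P x = (phi 1 x - x) - (phi 0 x - x) - Q x).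
  { intros x. pose proof (qf_eq _ _ _ _ _ _ flow 1 x ltac:(lra)). lra. }
  apply (lim_pinf_ext (fun x => 1 * (1 * (phi 0 x - x) + t * (1 * (1 * (phi 1 x - x) + (-1) * (phi 0 x - x)) + (-1) * Q x))
                               + t ^ 2 * Q x)).
  { intros x. rewrite (qf_eq _ _ _ _ _ _ flow t x Jt), HP. ring. }
  replace ((t ^ 2 - t) * N2) with (1 * (1 * 0 + t * (1 * (1 * 0 + (-1) * 0) + (-1) * (1 * N2))) + t ^ 2 * (1 * N2))
    by ring.
  repeat apply lim_pinf_lincomb; auto.
Qed.

End UnitTimeInterval.

Theorem mainTheorem8 (A : Aclass) :
  (forall (alpha beta : R) (phi : R -> R -> R) (u0 du0 : R -> R) (uinf E S0 : R),
     alpha < 0 < beta ->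
     is_geodesic A (fun t => alpha < t < beta) phi ->
     inA1 A u0 ->
     (forall x, derivable_pt_lim u0 x (du0 x)) ->
     lim_pinf u0 uinf ->
     integral_R (fun x => (du0 x) ^ 2) E ->
     (forall x, deriv_in (fun t => alpha < t < beta) (fun s => phi s x) 0 (u0 (phi 0 x))) ->
     has_shift (phi 0) S0 ->
     forall u : R -> R -> R,
       (forall t x, alpha < t < beta ->
          deriv_in (fun t => alpha < t < beta) (fun s => phi s x) t (u t (phi t x))) ->
       (forall t, alpha < t < beta ->
          has_shift (phi t) (S0 + t * uinf + t ^ 2 / 4 * E) /\
          lim_pinf (u t) (uinf + t / 2 * E)) /\
       ((exists x, u0 x <> 0) ->
          (forall t1 t2 t3,
             alpha < t1 < beta -> alpha < t2 < beta -> alpha < t3 < beta ->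
             inDiffA A (phi t1) -> inDiffA A (phi t2) -> inDiffA A (phi t3) ->
             t1 = t2 \/ t1 = t3 \/ t2 = t3) /\
          (forall t1 t2,
             alpha < t1 < beta -> alpha < t2 < beta ->
             lim_pinf (u t1) 0 -> lim_pinf (u t2) 0 -> t1 = t2))) /\
  (forall (phi : R -> R -> R) (d0 d1 : R -> R) (N1 N2 : R),
     is_geodesic A (fun t => 0 <= t <= 1) phi ->
     inDiffA A (phi 0) -> inDiffA A (phi 1) ->
     (forall x, derivable_pt_lim (phi 0) x (d0 x)) ->
     (forall x, derivable_pt_lim (phi 1) x (d1 x)) ->
     integral_R (fun x => (Rmap (d0 x) - Rmap (d1 x)) ^ 2) N1 ->
     integral_R (fun x => (sqrt (d0 x) - sqrt (d1 x)) ^ 2) N2 ->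
     forall t, 0 <= t <= 1 ->
       has_shift (phi t) ((t ^ 2 - t) / 4 * N1) /\
       has_shift (phi t) ((t ^ 2 - t) * N2)).
Proof.
  split.
  - intros alpha beta phi u0 du0 uinf E S0 Hab Hgeo Hu0 Hdu0 Hlim HE Hinit HS0 u Hu.
    destruct (quadratic_flow_of_geodesic A (fun t => alpha < t < beta) alpha beta (beta / 4) phi)
      as [w [k [P [Q Hflow]]]]; auto; try (intros; lra).
    pose proof (inA1_derivative_continuous A u0 du0 Hu0 Hdu0) as Hdc.
    split; [intros t Jt; split | intros Hnz; split].
    + eapply flow_shift; eauto.
    + eapply flow_velocity_lim; eauto.
    + eapply flow_at_most_two_times_in_DiffA; eauto.
    + eapply flow_at_most_one_tangency; eauto.
  - intros phi d0 d1 N1 N2 Hgeo HA0 HA1 Hd0 Hd1 HN1 HN2 t Jt.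
    destruct (quadratic_flow_of_geodesic A (fun t => 0 <= t <= 1) 0 1 (1 / 2) phi)
      as [w [k [P [Q Hflow]]]]; auto; try (intros; lra).
    assert (HN : N1 = 4 * N2).
    { apply (integral_R_unique (fun x => (Rmap (d0 x) - Rmap (d1 x)) ^ 2)); auto.
      apply (integral_R_scal_ext _ (fun x => (sqrt (d0 x) - sqrt (d1 x)) ^ 2)); auto.
      intros; unfold Rmap; ring. }
    assert (Hs : has_shift (phi t) ((t ^ 2 - t) * N2))
      by (eapply flow_shift_unit; eauto using inDiffA_has_shift0).
    split; auto. replace ((t ^ 2 - t) / 4 * N1) with ((t ^ 2 - t) * N2) by (rewrite HN; field). auto.
Qed.
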